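(* Let $(X,d)$ be a compact metric space with $\dim X=0$ and $f\colon X\to X$ an equicontinuous map. Then for every $\epsilon>0$ there is $\delta>0$ such that for every sequence $(x_i)_{i\ge0}$ in $X$ with $d(f(x_i),x_{i+1})\le\delta$ for all $i\ge0$, we have $d(x_i,f^i(x_0))\le\epsilon$ for every $i\ge0$.
   Context: $f$ is equicontinuous if for every $\epsilon>0$ there is $\delta>0$ such that $d(x,y)\le\delta$ implies $\sup_{n\ge0}d(f^n(x),f^n(y))\le\epsilon$. *)

From Stdlib Require Import Reals.
Open Scope R_scope.

Definition is_metric {X : Type} (d : X -> X -> R) : Prop :=
  (forall x y, 0 <= d x y) /\
  (forall x y, d x y = 0 <-> x = y) /\
  (forall x y, d x y = d y x) /\
  (forall x y z, d x z <= d x y + d y z).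

Definition is_open {X : Type} (d : X -> X -> R) (U : X -> Prop) : Prop :=
  forall x, U x -> exists r, 0 < r /\ forall y, d x y < r -> U y.

Definition compact_metric {X : Type} (d : X -> X -> R) : Prop :=
  forall (I : Type) (U : I -> X -> Prop),
    (forall i, is_open d (U i)) ->
    (forall x, exists i, U i x) ->
    exists l : list I, forall x, exists i, List.In i l /\ U i x.

(* Lebesgue covering dimension <= 0: every finite open cover U_0..U_{n-1}
   has a finite open refinement V_0..V_{m-1} of order <= 0, i.e. whose
   members are pairwise disjoint. *)
Definition covering_dim_le0 {X : Type} (d : X -> X -> R) : Prop :=
  forall (n : nat) (U : nat -> X -> Prop),
    (forall i, (i < n)%nat -> is_open d (U i)) ->
    (forall x, exists i, (i < n)%nat /\ U i x) ->
    exists (m : nat) (V : nat -> X -> Prop),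
      (forall j, (j < m)%nat -> is_open d (V j)) /\
      (forall x, exists j, (j < m)%nat /\ V j x) /\
      (forall j, (j < m)%nat -> exists i, (i < n)%nat /\ forall x, V j x -> U i x) /\
      (forall j k x, (j < m)%nat -> (k < m)%nat -> V j x -> V k x -> j = k).

(* dim X = 0 : covering dimension <= 0 and X nonempty (dim of the empty space is -1) *)
Definition dim_zero {X : Type} (d : X -> X -> R) : Prop :=
  inhabited X /\ covering_dim_le0 d.

Definition iter_f {X : Type} (f : X -> X) (n : nat) (x : X) : X := Nat.iter n f x.

Definition equicontinuous {X : Type} (d : X -> X -> R) (f : X -> X) : Prop :=
  forall eps, 0 < eps -> exists delta, 0 < delta /\
    forall x y, d x y <= delta ->
      forall n : nat, d (iter_f f n x) (iter_f f n y) <= eps.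

(* In a zero-dimensional compact space, f-orbits can be tracked inside a
   finite partition into small open (hence clopen) cells.  By the Lebesgue
   number lemma two points closer than some lambda lie in the same cell, and
   equicontinuity turns a delta-step of a pseudo-orbit into lambda-closeness of
   all further iterates.  Hence for every n the points f^n(x_(i+1)) and
   f^(n+1)(x_i) share a cell; chaining these relations, x_i lies in the cell of
   f^i(x_0), which has diameter at most eps. *)
From Stdlib Require Import Reals Lra List.
Open Scope R_scope.

Lemma finite_pos_lower_bound (l : list R) :
  (forall r, In r l -> 0 < r) -> exists lam, 0 < lam /\ forall r, In r l -> lam <= r.
Proof.
  induction l as [|a l IH]; intros Hpos.
  - exists 1; split; [lra | intros r []].
  - destruct IH as [lam [Hlam Hle]]; [intros r Hr; apply Hpos; right; exact Hr|].
    exists (Rmin a lam); split.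
    + apply Rmin_glb_lt; [apply Hpos; left|]; auto.
    + intros r [<- | Hr]; [apply Rmin_l|].
      eapply Rle_trans; [apply Rmin_r | auto].
Qed.

Section PseudoOrbit.

Variables (X : Type) (f : X -> X) (R : X -> X -> Prop).
Hypothesis R_trans : forall a b c, R a b -> R b c -> R a c.
Hypothesis R_refl : forall a, R a a.

Lemma pseudo_orbit_related (x : nat -> X) :
  (forall i n, R (iter_f f n (x (S i))) (iter_f f n (f (x i)))) ->
  forall i, R (x i) (iter_f f i (x O)).
Proof.
  intros Hstep.
  assert (Hgen : forall i n, R (iter_f f n (x i)) (iter_f f (n + i) (x O))).
  { induction i as [|i IH]; intros n.
    - rewrite Nat.add_0_r; apply R_refl.
    - apply R_trans with (iter_f f n (f (x i))); [apply Hstep|].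
      unfold iter_f in *; rewrite <- Nat.iter_succ_r, Nat.add_succ_r.
      apply (IH (S n)). }
  intros i; exact (Hgen i O).
Qed.

End PseudoOrbit.

Definition same_cell {X : Type} (m : nat) (V : nat -> X -> Prop) (a b : X) : Prop :=
  forall j, (j < m)%nat -> (V j a <-> V j b).

Section CompactMetric.

Variables (X : Type) (d : X -> X -> R).
Hypothesis Hmet : is_metric d.
Hypothesis Hcpt : compact_metric d.

Lemma dist_refl x : d x x = 0.
Proof. apply (proj1 (proj2 Hmet)); reflexivity. Qed.

Lemma dist_sym x y : d x y = d y x.
Proof. apply (proj1 (proj2 (proj2 Hmet))). Qed.

Lemma dist_triangle x y z : d x z <= d x y + d y z.
Proof. apply (proj2 (proj2 (proj2 Hmet))). Qed.

Lemma is_open_ball c r : is_open d (fun y => d c y < r).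
Proof.
  intros y Hy; exists (r - d c y); split; [lra|].
  intros z Hz; pose proof (dist_triangle c y z); lra.
Qed.

Lemma finite_ball_cover r : 0 < r -> exists l : list X, forall y, exists c, In c l /\ d c y < r.
Proof.
  intros Hr; destruct (Hcpt X (fun c y => d c y < r)) as [l Hl].
  - intros c; apply is_open_ball.
  - intros y; exists y; rewrite dist_refl; exact Hr.
  - exists l; exact Hl.
Qed.

Lemma lebesgue_number (m : nat) (V : nat -> X -> Prop) :
  (forall j, (j < m)%nat -> is_open d (V j)) ->
  (forall x, exists j, (j < m)%nat /\ V j x) ->
  exists lam, 0 < lam /\
    forall a, exists j, (j < m)%nat /\ forall b, d a b < lam -> V j b.
Proof.
  intros HVo HVc.
  (* W r is the set of points at distance < r from a centre whose 2r-ball lies in a cell *)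
  set (W := fun (r : {r : R | 0 < r}) a => exists c j, (j < m)%nat /\
              d c a < proj1_sig r /\ forall b, d c b < 2 * proj1_sig r -> V j b).
  destruct (Hcpt _ W) as [L HL].
  - intros r a [c [j [Hj [Hca Hball]]]]; exists (proj1_sig r - d c a); split; [lra|].
    intros z Hz; exists c, j; repeat split; auto.
    pose proof (dist_triangle c a z); lra.
  - intros a; destruct (HVc a) as [j [Hj Ha]].
    destruct (HVo j Hj a Ha) as [r [Hr Hball]].
    assert (Hr2 : 0 < r / 2) by lra.
    exists (exist _ (r / 2) Hr2), a, j; simpl; repeat split; auto.
    + rewrite dist_refl; exact Hr2.
    + intros b Hb; apply Hball; lra.
  - destruct (finite_pos_lower_bound (map (@proj1_sig _ _) L)) as [lam [Hlam Hle]].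
    { intros r Hr; apply in_map_iff in Hr; destruct Hr as [[r' Hr'] [<- _]]; exact Hr'. }
    exists lam; split; [exact Hlam|].
    intros a; destruct (HL a) as [r [Hr [c [j [Hj [Hca Hball]]]]]].
    assert (lam <= proj1_sig r) by (apply Hle, in_map, Hr).
    exists j; split; [exact Hj|].
    intros b Hb; apply Hball; pose proof (dist_triangle c a b); lra.
Qed.

Lemma small_open_partition r : 0 < r -> dim_zero d ->
  exists (m : nat) (V : nat -> X -> Prop),
    (forall j, (j < m)%nat -> is_open d (V j)) /\
    (forall x, exists j, (j < m)%nat /\ V j x) /\
    (forall j k x, (j < m)%nat -> (k < m)%nat -> V j x -> V k x -> j = k) /\
    (forall j, (j < m)%nat -> exists c, forall y, V j y -> d c y < r).
Proof.
  intros Hr [[x0] Hdim].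
  destruct (finite_ball_cover r Hr) as [l Hl].
  destruct (Hdim (length l) (fun i y => d (nth i l x0) y < r))
    as [m [V [HVo [HVc [HVref HVdisj]]]]].
  - intros i _; apply is_open_ball.
  - intros y; destruct (Hl y) as [c [Hc Hcy]].
    destruct (In_nth l c x0 Hc) as [i [Hi <-]]; exists i; auto.
  - exists m, V; repeat split; auto.
    intros j Hj; destruct (HVref j Hj) as [i [_ Hsub]]; exists (nth i l x0); exact Hsub.
Qed.

Lemma close_same_cell (m : nat) (V : nat -> X -> Prop) lam :
  (forall j k x, (j < m)%nat -> (k < m)%nat -> V j x -> V k x -> j = k) ->
  (forall a, exists j, (j < m)%nat /\ forall b, d a b < lam -> V j b) ->
  0 < lam -> forall a b, d a b < lam -> same_cell m V a b.
Proof.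
  intros Hdisj Hleb Hlam a b Hab k Hk.
  destruct (Hleb a) as [j [Hj Hball]].
  assert (Va : V j a) by (apply Hball; rewrite dist_refl; exact Hlam).
  pose proof (Hball b Hab) as Vb.
  split; intros Hv.
  - rewrite (Hdisj k j a Hk Hj Hv Va); exact Vb.
  - rewrite (Hdisj k j b Hk Hj Hv Vb); exact Va.
Qed.

End CompactMetric.

Theorem lemma3p2 (X : Type) (d : X -> X -> R) (f : X -> X)
  (Hmet : is_metric d) (Hcpt : compact_metric d) (Hdim : dim_zero d)
  (Heq : equicontinuous d f) :
  forall eps, 0 < eps -> exists delta, 0 < delta /\
    forall x : nat -> X,
      (forall i : nat, d (f (x i)) (x (S i)) <= delta) ->
      forall i : nat, d (x i) (iter_f f i (x O)) <= eps.
Proof.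
  intros eps Heps.
  destruct (small_open_partition X d Hmet Hcpt (eps / 2) ltac:(lra) Hdim)
    as [m [V [HVo [HVc [HVdisj HVsmall]]]]].
  destruct (lebesgue_number X d Hmet Hcpt m V HVo HVc) as [lam [Hlam Hleb]].
  destruct (Heq (lam / 2) ltac:(lra)) as [delta [Hdelta Hequi]].
  exists delta; split; [exact Hdelta|].
  intros x Hx i.
  assert (Hcell : same_cell m V (x i) (iter_f f i (x O))).
  { apply (pseudo_orbit_related X f (same_cell m V)).
    - intros a b c Hab Hbc j Hj; rewrite (Hab j Hj); apply Hbc, Hj.
    - intros a j _; tauto.
    - intros k n; apply (close_same_cell X d Hmet m V lam HVdisj Hleb Hlam).
      rewrite (dist_sym X d Hmet); pose proof (Hequi _ _ (Hx k) n); lra. }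
  destruct (HVc (x i)) as [j [Hj Vx]].
  destruct (HVsmall j Hj) as [c Hc].
  pose proof (Hc _ Vx); pose proof (Hc _ (proj1 (Hcell j Hj) Vx)).
  pose proof (dist_triangle X d Hmet (x i) c (iter_f f i (x O))).
  rewrite (dist_sym X d Hmet (x i) c) in *; lra.
Qed.
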